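(* For any direct signaling scheme $\pi$, the expected regret incurred by the procedure CheckPersu$(\pi)$ is at most $$\frac{U(\pi^* )}{\sum_{i\in[m]}\lambda(i)\pi(i)}-\mathbf{1}[\pi\text{ is persuasive}].$$
   Context: Model: state space $[m]$, common prior $\lambda\in\Delta([m])$, user actions $\{0,1\}$, user utility $\rho$; $\omega(i)=(\rho(i,1)-\rho(i,0))\lambda(i)$, with standing assumptions that some $\omega(i)>0$ and $\sum_i\omega(i)<0$. In each round the platform commits to a signaling scheme, a state $\theta_t\sim\lambda$ (independent across rounds) and a signal are drawn, the user forms the Bayesian posterior and takes action 1 iff its posterior expected utility is at least that of action 0, and the platform gets utility equal to the action. $U(\pi)$ is the platform's expected one-round utility under $\pi$. A direct signaling scheme has signals $\{0,1\}$, sending signal 1 in state $i$ w.p. $\pi(i)$; it is persuasive if the user takes action 1 whenever signal 1 is realized. $\pi^*$ is an optimal solution of $\max_{\pi\in[0,1]^m}\sum_i\lambda(i)\pi(i)$ s.t. $\sum_i\omega(i)\pi(i)\ge0$ (the optimal scheme in hindsight). Procedure CheckPersu$(\pi)$: in each successive round commit to $\pi$; if $\sigma_t=1,a_t=1$ return True; if $\sigma_t=1,a_t=0$ return False; if $\sigma_t=0,a_t=1$ return False; else continue to the next round. The regret incurred by the procedure is the expected sum, over the rounds it uses, of $U(\pi^* )-U(\pi)$. *)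

From HB Require Import structures.
From mathcomp Require Import all_boot all_order all_algebra.
From mathcomp Require Import all_classical all_reals all_analysis.
Set Implicit Arguments. Unset Strict Implicit. Unset Printing Implicit Defensive.
Import Order.TTheory GRing.Theory Num.Theory.
Local Open Scope ring_scope.

(* Conventions: states are 'I_m; user actions {0,1} are encoded as bool
   (false = 0, true = 1); signals of a direct scheme are bool
   (false = signal 0, true = signal 1).  A direct scheme is a vector
   pi : 'I_m -> R, sending signal 1 in state i with probability pi i. *)

Section Model.
Variables (R : realType) (m : nat).
Variables (lam : 'I_m -> R) (rho : 'I_m -> bool -> R).

Definition is_prior : Prop := (forall i, 0 <= lam i) /\ \sum_i lam i = 1.

Definition omega (i : 'I_m) : R := (rho i true - rho i false) * lam i.

Definition standing_assumptions : Prop :=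
  (exists i, 0 < omega i) /\ \sum_i omega i < 0.

Definition direct_scheme (pi : 'I_m -> R) : Prop :=
  forall i, 0 <= pi i <= 1.

Definition sigp (pi : 'I_m -> R) (i : 'I_m) (s : bool) : R :=
  if s then pi i else 1 - pi i.

Definition Psig (pi : 'I_m -> R) (s : bool) : R :=
  \sum_i lam i * sigp pi i s.

Definition posterior (pi : 'I_m -> R) (s : bool) (i : 'I_m) : R :=
  lam i * sigp pi i s / Psig pi s.

Definition post_util (pi : 'I_m -> R) (s : bool) (a : bool) : R :=
  \sum_i posterior pi s i * rho i a.

Definition action (pi : 'I_m -> R) (s : bool) : bool :=
  post_util pi s false <= post_util pi s true.

(* platform's expected one-round utility (= probability of action 1) *)
Definition U (pi : 'I_m -> R) : R :=
  \sum_(s : bool) Psig pi s * (action pi s)%:R.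

Definition persuasive (pi : 'I_m -> R) : bool :=
  (Psig pi true > 0) ==> action pi true.

Definition LP_feasible (p : 'I_m -> R) : Prop :=
  direct_scheme p /\ 0 <= \sum_i omega i * p i.
Definition LP_optimal (ps : 'I_m -> R) : Prop :=
  LP_feasible ps /\
  forall p, LP_feasible p -> \sum_i lam i * p i <= \sum_i lam i * ps i.

(* ---- the procedure CheckPersu(pi) ----
   Each round: theta ~ lam (iid), signal sigma ~ sigp pi theta, the user plays
   a = action pi sigma.  The procedure continues to the next round exactly when
   sigma = 0 and a = 0; otherwise it returns (True iff sigma = 1, a = 1). *)

Definition round_continues (pi : 'I_m -> R) (o : 'I_m * bool) : bool :=
  ~~ o.2 && ~~ action pi o.2.

Definition round_prob (pi : 'I_m -> R) (o : 'I_m * bool) : R :=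
  lam o.1 * sigp pi o.1 o.2.

(* probability that the procedure uses round n+1, i.e. that the first n
   rounds (history h of states and signals) all continued *)
Definition P_round_used (pi : 'I_m -> R) (n : nat) : R :=
  \sum_(h : {ffun 'I_n -> 'I_m * bool})
     (\prod_(k < n) round_prob pi (h k)) *
     ([forall k, round_continues pi (h k)])%:R.

Definition checkpersu_regret (pi ps : 'I_m -> R) : \bar R :=
  (\sum_(0 <= n <oo) ((P_round_used pi n * (U ps - U pi))%:E))%E.

End Model.

(* CheckPersu continues only after signal 0 met by action 0, so it uses round
   n+1 with probability q^n, where q = P(signal 0) if action 0 follows signal 0
   and q = 0 otherwise.  The regret is therefore the geometric sum
   (U(ps) - U(pi)) / (1 - q), and a case analysis on the two actions compares it
   with U(ps) / P(signal 1) minus the action after signal 1, which is the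
   persuasiveness indicator since P(signal 1) > 0. *)
From HB Require Import structures.
From mathcomp Require Import all_boot all_order all_algebra.
From mathcomp Require Import all_classical all_reals all_analysis.
From mathcomp Require Import lra.
Set Implicit Arguments. Unset Strict Implicit. Unset Printing Implicit Defensive.
Import Order.TTheory GRing.Theory Num.Theory.
Local Open Scope ring_scope.

Lemma eseries_geometric (R : realType) (c q : R) : `|q| < 1 ->
  (\sum_(0 <= n <oo) (c * q ^+ n)%:E)%E = (c / (1 - q))%:E.
Proof.
move=> q_lt1.
have -> : (fun n => \sum_(0 <= k < n) (c * q ^+ k)%:E)%E
    = EFin \o series (geometric c q).
  by apply/funext => n /=; rewrite sumEFin.
rewrite EFin_lim; last exact: is_cvg_geometric_series.
have /(@cvg_unique _ (@Rhausdorff R)) := cvg_geometric_series (a:=c) q_lt1.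
by move/(_ _ (is_cvg_geometric_series (a:=c) q_lt1)) => ->.
Qed.

Lemma regret_bound_by_actions (R : realFieldType) (p u : R) (a0 a1 : bool) :
  0 < p <= 1 -> 0 <= u ->
  (u - (p * a1%:R + (1 - p) * a0%:R)) / (1 - (1 - p) * (~~ a0)%:R)
    <= u / p - a1%:R.
Proof.
case/andP=> p_gt0 p_le1 u_ge0.
have up_ge_u : u <= u / p by rewrite ler_pdivlMr // ler_piMr.
case: a0; case: a1 => /=;
  rewrite ?(mulr0, mulr1, addr0, add0r, subr0, divr1, subKr) //; try lra.
by rewrite mulrBl divff ?gt_eqF.
Qed.

Section CheckPersu.
Variables (R : realType) (m : nat).
Variables (lam : 'I_m -> R) (rho : 'I_m -> bool -> R).

Definition continue_prob (pi : 'I_m -> R) : R :=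
  \sum_(o : 'I_m * bool) round_prob lam pi o * (round_continues lam rho pi o)%:R.

Lemma P_round_used_exp (pi : 'I_m -> R) (n : nat) :
  P_round_used lam rho pi n = continue_prob pi ^+ n.
Proof.
rewrite /P_round_used /continue_prob -[in RHS](card_ord n) -prodr_const.
rewrite bigA_distr_bigA; apply: eq_bigr => h _; rewrite [RHS]big_split /=.
congr (_ * _); case: (boolP [forall k, _]) => [/forallP cont | /forallPn[k stop]].
  by rewrite big1 // => k _; rewrite cont.
by rewrite (bigD1 k) //= (negbTE stop) mul0r.
Qed.

Lemma continue_probE (pi : 'I_m -> R) :
  continue_prob pi = Psig lam pi false * (~~ action lam rho pi false)%:R.
Proof.
transitivity (\sum_i \sum_s
    round_prob lam pi (i, s) * (round_continues lam rho pi (i, s))%:R).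
  by rewrite pair_bigA; apply: eq_bigr => -[i s].
rewrite /Psig mulr_suml; apply: eq_bigr => i _.
by rewrite big_bool /round_continues /round_prob /= mulr0 add0r.
Qed.

Lemma checkpersu_regretE (pi ps : 'I_m -> R) : `|continue_prob pi| < 1 ->
  checkpersu_regret lam rho pi ps =
    ((U lam rho ps - U lam rho pi) / (1 - continue_prob pi))%:E.
Proof.
move=> q_lt1; rewrite /checkpersu_regret -eseries_geometric //.
by apply: eq_eseriesr => n _; rewrite P_round_used_exp mulrC.
Qed.

Lemma UE (pi : 'I_m -> R) :
  U lam rho pi = Psig lam pi true * (action lam rho pi true)%:R
               + Psig lam pi false * (action lam rho pi false)%:R.
Proof. by rewrite /U big_bool. Qed.

Lemma Psig_ge0 (pi : 'I_m -> R) (s : bool) :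
  (forall i, 0 <= lam i) -> direct_scheme pi -> 0 <= Psig lam pi s.
Proof.
move=> lam_ge0 pi01; apply: sumr_ge0 => i _; rewrite mulr_ge0 // /sigp.
by case/andP: (pi01 i) => ? ?; case: s; rewrite // subr_ge0.
Qed.

Lemma Psig_false (pi : 'I_m -> R) :
  is_prior lam -> Psig lam pi false = 1 - Psig lam pi true.
Proof.
case=> _ lam1; rewrite /Psig /sigp /=.
under eq_bigr do rewrite mulrBr mulr1.
by rewrite sumrB lam1.
Qed.

Lemma U_ge0 (pi : 'I_m -> R) :
  (forall i, 0 <= lam i) -> direct_scheme pi -> 0 <= U lam rho pi.
Proof.
by move=> lam_ge0 pi01; apply: sumr_ge0 => s _; rewrite mulr_ge0 ?Psig_ge0.
Qed.

End CheckPersu.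

Theorem mainTheorem5 (R : realType) (m : nat)
    (lam : 'I_m -> R) (rho : 'I_m -> bool -> R)
    (pi ps : 'I_m -> R) :
  is_prior lam ->
  standing_assumptions lam rho ->
  LP_optimal lam rho ps ->
  direct_scheme pi ->
  0 < \sum_i lam i * pi i ->
  (checkpersu_regret lam rho pi ps <=
   (U lam rho ps / (\sum_i lam i * pi i)
    - (persuasive lam rho pi)%:R)%:E)%E.
Proof.
move=> prior _ [[ps01 _] _] pi01 P1_gt0.
have lam_ge0 := prior.1.
have Psig1_gt0 : 0 < Psig lam pi true := P1_gt0.
have Psig1_le1 : Psig lam pi true <= 1.
  by rewrite -subr_ge0 -Psig_false // Psig_ge0.
have persuasiveE : persuasive lam rho pi = action lam rho pi true.
  by rewrite /persuasive Psig1_gt0.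
have q_lt1 : `|continue_prob lam rho pi| < 1.
  rewrite continue_probE Psig_false //.
  case: (action _ _ _ false); rewrite /= ?mulr0 ?normr0 // mulr1.
  by rewrite ger0_norm ?subr_ge0 // ltrBlDr ltrDl.
rewrite -[\sum_i _ * _]/(Psig lam pi true) checkpersu_regretE // lee_fin.
rewrite persuasiveE (UE _ _ pi) continue_probE (Psig_false pi prior).
apply: regret_bound_by_actions; first by rewrite Psig1_gt0 Psig1_le1.
exact: U_ge0 _ lam_ge0 ps01.
Qed.
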